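(* Let $(\Gamma,\gamma)$ be a spin network and let $(\Gamma',\gamma)$ be obtained by reversing the cyclic ordering at one vertex whose incident edges have colors $a,b,c$ (the underlying graph and coloring unchanged). Then $$\langle\Gamma',\gamma\rangle^P=(-1)^{(a(a-1)+b(b-1)+c(c-1))/2}\,\langle\Gamma,\gamma\rangle^P,$$ and the same relation holds for the standard evaluation $\langle\cdot\rangle$.
   Context: A cubic ribbon graph $\Gamma$ is a finite graph all of whose vertices are trivalent (multiple edges and loops are allowed, as are components that are circles without vertices), together with a cyclic ordering of the three edge-ends at each vertex. A coloring $\gamma$ assigns to each edge $e\in E(\Gamma)$ a natural number $\gamma_e$; the pair $(\Gamma,\gamma)$ is a spin network. It is admissible if at every vertex with incident colors $a,b,c$ the sum $a+b+c$ is even and $|a-b|\le c\le a+b$. The Penrose evaluation $\langle\Gamma,\gamma\rangle^P$ is $0$ if $(\Gamma,\gamma)$ is not admissible; otherwise thicken $\Gamma$ into a surface using the cyclic orderings (vertices become disks, edges become untwisted bands), replace each edge colored $a$ by $a$ parallel strands in its band with the antisymmetrizer $\sum_{\sigma\in S_a}\mathrm{sgn}(\sigma)\sigma$ inserted, and in the disk of each vertex with incident colors $a,b,c$ join $(a+b-c)/2$ strands of the $a$-edge to the $b$-edge, $(a-b+c)/2$ strands of the $a$-edge to the $c$-edge and $(-a+b+c)/2$ strands of the $b$-edge to the $c$-edge by pairwise non-crossing arcs; expanding gives a signed sum of collections of closed loops, and a collection of $n$ loops is assigned the value $(-2)^n$. The (standard) evaluation is $\langle\Gamma,\gamma\rangle=\langle\Gamma,\gamma\rangle^P/\mathcal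 I!$, where $\mathcal I!=\prod_{v\in V(\Gamma)}\big(\tfrac{-a_v+b_v+c_v}{2}\big)!\big(\tfrac{a_v-b_v+c_v}{2}\big)!\big(\tfrac{a_v+b_v-c_v}{2}\big)!$ and $a_v,b_v,c_v$ are the colors of the edges at $v$ (and $\langle\Gamma,\gamma\rangle=0$ if not admissible). *)

From HB Require Import structures.
From mathcomp Require Import all_boot all_order all_algebra all_fingroup.
Set Implicit Arguments. Unset Strict Implicit. Unset Printing Implicit Defensive.
Import GRing.Theory Num.Theory.

(*  - E : finType of edges having endpoints; each edge has two ends         *)
(*    (darts) indexed by bool: a dart is d : E * bool.                      *)
(*  - rot : dart -> dart is the cyclic ordering: rot d is the next dart     *)
(*    (counterclockwise) at the vertex of d.  Vertices = orbits of rot,     *)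
(*    which must all have size 3 (trivalence): rot^3 = id, no fixed points. *)
(*    Loops (both ends of an edge at one vertex) and multiple edges are     *)
(*    allowed.                                                              *)
(*  - C : finType of vertex-free circle components.                         *)

Definition cubic (E : finType) (rot : E * bool -> E * bool) : Prop :=
  (forall d, rot (rot (rot d)) = d) /\ (forall d, rot d != d).

Section Penrose.
Variables (E C : finType) (rot : E * bool -> E * bool) (col : E -> nat) (colC : C -> nat).

Definition dcol (d : E * bool) : nat := col d.1.

Definition admissible : bool :=
  [forall d : E * bool,
    let a := dcol d in let b := dcol (rot d) in let c := dcol (rot (rot d)) in
    [&& ~~ odd (a + b + c), a - b <= c, b - a <= c & c <= a + b]].

(* strand endpoints: the dcol d points of the edge-end d on the boundary of
   the vertex disk, indexed 0 .. dcol d - 1 in counterclockwise order *)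
Definition point := {d : E * bool & 'I_(dcol d)}.
Definition pdart (p : point) : E * bool := tag p.
Definition pidx (p : point) : nat := tagged p.

(* non-crossing arcs in the disk of a vertex: between dart d (color a) and
   the next dart d' = rot d (color b), with c the color of the third dart,
   the last x = (a+b-c)/2 points of d are joined to the first x points of d'
   (point a-1-k of d to point k of d') *)
Definition varc1 (p q : point) : bool :=
  let a := dcol (pdart p) in let b := dcol (pdart q) in
  let c := dcol (rot (pdart q)) in
  [&& pdart q == rot (pdart p), pidx p + pidx q + 1 == a & pidx q < (a + b - c) %/ 2].

Definition varc (p q : point) : bool := varc1 p q || varc1 q p.

(* the untwisted band of edge e with the antisymmetrizer term s : 'S_(col e)
   inserted: the strand starting at point i of end (e,false) arrives at end
   (e,true) at the point with counterclockwise index col e - 1 - s i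
   (an untwisted band in the oriented thickening reverses counterclockwise
   indices) *)
Definition earc1 (s : forall e : E, 'S_(col e)) (p q : point) : bool :=
  [&& (pdart p).1 == (pdart q).1, ~~ (pdart p).2, (pdart q).2 &
      pidx q + (s (pdart p).1 (tagged p) : nat) + 1 == col (pdart p).1].

Definition earc s (p q : point) : bool := earc1 s p q || earc1 s q p.

(* number of closed loops = number of connected components of the graph on
   strand endpoints whose edges are the arcs *)
Definition nloops (s : forall e : E, 'S_(col e)) : nat :=
  n_comp (fun p q : point => varc p q || earc s p q) predT.

Definition penroseP : int :=
  (if admissible then
    (\sum_(s : {dffun forall e : E, 'S_(col e)})
       (\prod_(e : E) (-1) ^+ odd_perm (s e)) * (-2) ^+ nloops s)
    * \prod_(c : C) (\sum_(t : 'S_(colC c)) (-1) ^+ odd_perm t * (-2) ^+ #|porbits t|)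
  else 0)%R.

(* I! : product over vertices of the three factorials; written as a product
   over darts d of ((a+b-c)/2)! with a,b,c the colors of d, rot d, rot(rot d)
   (each vertex contributes exactly its three factorials) *)
Definition Ifact : nat :=
  \prod_(d : E * bool)
    ((dcol d + dcol (rot d) - dcol (rot (rot d))) %/ 2)`!.

Definition std_eval : rat :=
  (if admissible then (penroseP%:~R : rat) / (Ifact%:R) else 0)%R.

End Penrose.

Definition reverse_at (E : finType) (rot : E * bool -> E * bool) (d0 : E * bool)
  (d : E * bool) : E * bool :=
  if d \in [:: d0; rot d0; rot (rot d0)] then rot (rot d) else rot d.

(* Let v be the vertex carrying the darts d0, rot d0, rot (rot d0), with colors
   a, b, c.  Reversing the cyclic order at v is undone, on the level of the
   Penrose state sum, by a relabelling:
   - every strand endpoint on a dart of v has its index reversed (i |-> n-1-i);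
     this maps the vertex arcs of the reversed network onto those of the
     original one, and keeps every other arc in place;
   - every antisymmetrizer term s_e is conjugated by the reversal permutation
     at each end of e lying at v, so that the band arcs are preserved too.
   Hence each state has the same number of loops before and after, while its
   sign changes by the signs of the three reversal permutations, i.e. by
   (-1)^(C(a,2) + C(b,2) + C(c,2)).  Admissibility and the factorial
   normalization I! only depend on the unordered triple at v, so the
   standard evaluation changes by the same sign. *)

From HB Require Import structures.
From mathcomp Require Import all_boot all_order all_algebra all_fingroup zify.
Import GRing.Theory Num.Theory.
Set Implicit Arguments. Unset Strict Implicit. Unset Printing Implicit Defensive.

Definition rev_perm n : 'S_n := perm (@rev_ord_inj n).

Lemma rev_permE n (i : 'I_n) : rev_perm n i = rev_ord i.
Proof. by rewrite permE. Qed.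

Lemma rev_permK n : (rev_perm n * rev_perm n = 1)%g.
Proof. by apply/permP => i; rewrite permM !rev_permE rev_ordK perm1. Qed.

(* Reversing n+1 points = fixing the order of the last n, then moving the
   first point to the end; this gives the recursion for the sign. *)
Lemma rev_perm_lift n : rev_perm n.+1 = lift_perm ord0 ord_max (rev_perm n).
Proof.
apply/permP => x; apply/val_inj; case: (unliftP ord0 x) => [k|] ->.
- rewrite lift_perm_lift !rev_permE /= /bump; have := ltn_ord k; lia.
- by rewrite lift_perm_id rev_permE /=; lia.
Qed.

Lemma odd_rev_perm n : odd_perm (rev_perm n) = odd 'C(n, 2).
Proof.
elim: n => [|n IH].
  by rewrite (_ : rev_perm 0 = 1%g) ?odd_perm1 //; apply/permP => -[].
by rewrite rev_perm_lift odd_lift_perm IH binS bin1 oddD /= addbC.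
Qed.

(* Relates the exponent of the paper, (n(n-1))/2, to C(n, 2). *)
Lemma mul_pred_binom n : n * n.-1 = 'C(n, 2) * 2.
Proof.
have n_pred_even : ~~ odd (n * n.-1).
  by case: n => //= m; rewrite oddM /=; case: (odd m).
by rewrite bin2 muln2 -{1}(odd_double_half (n * n.-1)) (negbTE n_pred_even).
Qed.

(* Two points of a band with reversed indices match iff the originals do. *)
Lemma rev_index_match n x y : x < n -> y < n ->
  ((n - x.+1) + (n - y.+1) + 1 == n) = (x + y + 1 == n).
Proof. by move=> hx hy; apply/eqP/eqP; lia. Qed.

(* A vertex arc between reversed endpoints is the reversed vertex arc. *)
Lemma rev_index_vertex_arc a b K i j : i < a -> j < b ->
  ((a - i.+1 + (b - j.+1) + 1 == a) && (b - j.+1 < K)) =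
  ((j + i + 1 == b) && (i < K)).
Proof.
move=> ha hb; have [ji_b|ji_nb] := eqVneq (j + i + 1) b.
- have -> : b - j.+1 = i by lia.
  by have -> : a - i.+1 + i + 1 == a by apply/eqP; lia.
- by have -> // : (a - i.+1 + (b - j.+1) + 1 == a) = false by apply/eqP; lia.
Qed.

Lemma admissible_triple_swap x y z :
  [&& ~~ odd (x + y + z), x - y <= z, y - x <= z & z <= x + y] =
  [&& ~~ odd (x + z + y), x - z <= y, z - x <= y & y <= x + z].
Proof.
rewrite !leq_subLR (addnAC x z y) (addnC z y) (addnC x z) (addnC x y).
by case: (~~ _); case: (x <= _); case: (y <= _); case: (z <= _).
Qed.

Lemma big_seq3 (T : Type) (R : pzSemiRingType) (F : T -> R) x y z :
  (\prod_(t <- [:: x; y; z]) F t = F x * F y * F z)%R.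
Proof. by rewrite !big_cons big_nil mulr1 mulrA. Qed.

Section ReverseVertex.
Variables (E C : finType) (rot : E * bool -> E * bool) (col : E -> nat)
  (colC : C -> nat) (d0 : E * bool).
Hypothesis rot_cubic : cubic rot.

Local Notation v0 := [:: d0; rot d0; rot (rot d0)].
Local Notation rot' := (reverse_at rot d0).

Lemma rot3 d : rot (rot (rot d)) = d.
Proof. by case: rot_cubic. Qed.

Lemma rot_inj : injective rot.
Proof. exact: (can_inj (g := fun d => rot (rot d))) rot3. Qed.

Lemma mem_v0_rot d : (rot d \in v0) = (d \in v0).
Proof.
have rot_d0 : (rot d == d0) = (d == rot (rot d0)).
  by apply/eqP/eqP => [<-|->]; rewrite ?rot3.
rewrite !inE rot_d0 !(inj_eq rot_inj).
by case: (d == d0); case: (d == rot d0); case: (d == rot (rot d0)).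
Qed.

Lemma v0_uniq : uniq v0.
Proof.
have d0_rot : d0 != rot d0 by rewrite eq_sym; case: rot_cubic.
have d0_rot2 : d0 != rot (rot d0).
  by apply: contraNneq d0_rot => {2}->; rewrite rot3.
by rewrite /= !inE negb_or d0_rot d0_rot2 (inj_eq rot_inj) d0_rot.
Qed.

(* The reversed rotation is rot^2 = rot^-1 on v0 and rot elsewhere. *)
Lemma reverse_at_in d : d \in v0 -> rot' d = rot (rot d).
Proof. by rewrite /reverse_at => ->. Qed.

Lemma reverse_at_out d : d \notin v0 -> rot' d = rot d.
Proof. by rewrite /reverse_at => /negbTE ->. Qed.

(* At a dart of v0, the reversed rotation lists the colors of the vertex in
   the order a, c, b; elsewhere nothing changes. *)
Lemma admissible_reverse : admissible rot' col = admissible rot col.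
Proof.
apply: eq_forallb => d /=; rewrite /dcol.
have [d_v0|d_nv0] := boolP (d \in v0).
- rewrite (reverse_at_in d_v0) reverse_at_in ?mem_v0_rot // rot3.
  exact: admissible_triple_swap.
- by rewrite (reverse_at_out d_nv0) reverse_at_out ?mem_v0_rot.
Qed.

(* The dart relabelling rot^2 on v0 identifies the factorials of the two
   networks term by term. *)
Lemma Ifact_reverse : Ifact rot' col = Ifact rot col.
Proof.
pose h d := if d \in v0 then rot (rot d) else d.
have h_inj : injective h.
  move=> x y; rewrite /h; case: ifP => x_v0; case: ifP => y_v0 Exy.
  - exact/rot_inj/rot_inj.
  - by move: y_v0; rewrite -Exy !mem_v0_rot x_v0.
  - by move: x_v0; rewrite Exy !mem_v0_rot y_v0.
  - exact: Exy.
rewrite /Ifact [RHS](reindex_inj h_inj); apply: eq_bigr => d _; rewrite /h /dcol.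
have [d_v0|d_nv0] := boolP (d \in v0).
- by rewrite (reverse_at_in d_v0) reverse_at_in ?mem_v0_rot // !rot3 addnC.
- by rewrite (reverse_at_out d_nv0) reverse_at_out ?mem_v0_rot.
Qed.

Definition flip_point (p : point col) : point col :=
  Tagged (fun d => 'I_(dcol col d))
    (if tag p \in v0 then rev_ord (tagged p) else tagged p).

Lemma flip_pointK : involutive flip_point.
Proof. by case=> d i; rewrite /flip_point /=; case: (d \in v0); rewrite ?rev_ordK. Qed.

Definition end_flip (d : E * bool) : 'S_(dcol col d) :=
  if d \in v0 then rev_perm _ else 1%g.

Definition twist (s : {dffun forall e : E, 'S_(col e)}) :
    {dffun forall e : E, 'S_(col e)} :=
  [ffun e => (end_flip (e, false) * s e * end_flip (e, true))%g].

Lemma twistK : involutive twist.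
Proof.
move=> s; apply/ffunP => e; rewrite !ffunE; apply/permP => x.
rewrite !permM /end_flip.
by case: ((e, false) \in v0); case: ((e, true) \in v0);
  rewrite ?rev_permE ?rev_ordK ?perm1.
Qed.

Lemma earc1_flip (s : {dffun forall e : E, 'S_(col e)}) p q :
  earc1 (twist s) (flip_point p) (flip_point q) = earc1 s p q.
Proof.
case: p => [[e1 b1] i]; case: q => [[e2 b2] j].
rewrite /earc1 /flip_point /pdart /pidx /=.
have [e12|] // := eqVneq e1 e2; subst e2; move: i j; case: b1; case: b2 => i j //=.
rewrite ffunE !permM /end_flip.
by case: ((e1, false) \in v0); rewrite ?rev_permE ?rev_ordK ?perm1;
  case: ((e1, true) \in v0); rewrite ?rev_permE ?perm1 //= rev_index_match.
Qed.

(* At v0 the reversed network's arc from p to q is the original arc from q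
   to p; no arc joins v0 to another vertex. *)
Lemma varc1_flip p q : varc1 rot' (flip_point p) (flip_point q) =
  if tag p \in v0 then varc1 rot q p else varc1 rot p q.
Proof.
case: p => [d i]; case: q => [d' j]; rewrite /varc1 /flip_point /pdart /pidx /=.
have [d_v0|d_nv0] := boolP (d \in v0); have [d'_v0|d'_nv0] := boolP (d' \in v0).
- rewrite (reverse_at_in d_v0) (reverse_at_in d'_v0).
  have -> : (d' == rot (rot d)) = (d == rot d').
    by apply/eqP/eqP => [->|->]; rewrite ?rot3.
  have [d_rot|] //= := eqVneq d (rot d'); subst d; rewrite /dcol.
  by rewrite (addnC (col d'.1)) rev_index_vertex_arc.
- rewrite (reverse_at_in d_v0).
  have -> : (d' == rot (rot d)) = false.
    by apply: contraNF d'_nv0 => /eqP ->; rewrite !mem_v0_rot.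
  have -> // : (d == rot d') = false.
    by apply: contraTF d_v0 => /eqP ->; rewrite mem_v0_rot.
- rewrite (reverse_at_out d_nv0).
  by have -> // : (d' == rot d) = false
    by apply: contraTF d'_v0 => /eqP ->; rewrite mem_v0_rot.
- by rewrite (reverse_at_out d_nv0) (reverse_at_out d'_nv0).
Qed.

Lemma varc1_same_vertex (p q : point col) :
  varc1 rot p q -> (tag q \in v0) = (tag p \in v0).
Proof. by rewrite /varc1 /pdart => /and3P[/eqP -> _ _]; rewrite mem_v0_rot. Qed.

Lemma varc_flip (p q : point col) :
  varc rot' (flip_point p) (flip_point q) = varc rot p q.
Proof.
have no_arc (u v : point col) :
    (tag u \in v0) != (tag v \in v0) -> varc1 rot u v = false.
  by move=> uv; apply: contraNF uv => /varc1_same_vertex ->.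
rewrite /varc !varc1_flip.
case p_v0: (tag p \in v0); case q_v0: (tag q \in v0).
- exact: orbC.
- by rewrite !no_arc ?p_v0 ?q_v0.
- by rewrite !no_arc ?p_v0 ?q_v0.
- by [].
Qed.

Definition arc_graph (r : E * bool -> E * bool) (s : forall e : E, 'S_(col e)) :
    rel (point col) :=
  fun p q => varc r p q || earc s p q.

Lemma arc_graph_sym r s : connect_sym (arc_graph r s).
Proof.
apply: sym_connect_sym => p q; rewrite /arc_graph /varc /earc.
by case: (varc1 r p q); case: (varc1 r q p); case: (earc1 s p q); case: (earc1 s q p).
Qed.

(* flip_point is an isomorphism between the arc graphs of the state
   twist s of the reversed network and the state s of the original one. *)
Lemma nloops_reverse (s : {dffun forall e : E, 'S_(col e)}) :
  nloops rot' (twist s) = nloops rot s.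
Proof.
have flip_iso : rel_adjunction flip_point (arc_graph rot' (twist s)) (arc_graph rot s) predT.
  apply: strict_adjunction => //.
  - exact: arc_graph_sym.
  - exact: inv_inj flip_pointK.
  - by apply/subsetP => x _; apply/codomP; exists (flip_point x); rewrite flip_pointK.
  - by move=> x y _; rewrite /arc_graph varc_flip /earc !earc1_flip.
exact: (adjunction_n_comp _ (arc_graph_sym _ _) (arc_graph_sym _ _) _ flip_iso).
Qed.

Local Open Scope ring_scope.

Definition vertex_sign_exp : nat :=
  ('C(dcol col d0, 2) + 'C(dcol col (rot d0), 2) + 'C(dcol col (rot (rot d0)), 2))%N.

(* Twisting multiplies the sign of a state by the signs of the three
   reversal permutations at the darts of v0. *)
Lemma sign_twist (s : {dffun forall e : E, 'S_(col e)}) :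
  \prod_(e : E) (-1) ^+ odd_perm (twist s e) =
  (-1) ^+ vertex_sign_exp * \prod_(e : E) (-1) ^+ odd_perm (s e) :> int.
Proof.
pose sgn_end (d : E * bool) : int := (-1) ^+ odd_perm (end_flip d).
have -> : \prod_(e : E) (-1) ^+ odd_perm (twist s e) =
    \prod_(e : E) ((-1) ^+ odd_perm (s e) * (sgn_end (e, true) * sgn_end (e, false))) :> int.
  apply: eq_bigr => e _; rewrite ffunE !odd_permM /sgn_end.
  by move: (odd_perm _) (odd_perm _) (odd_perm _) => [] [] [].
rewrite big_split /= mulrC; congr (_ * _).
have -> : \prod_(e : E) (sgn_end (e, true) * sgn_end (e, false)) = \prod_d sgn_end d.
  rewrite -(pair_big xpredT xpredT (fun e b => sgn_end (e, b))) /=.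
  by apply: eq_bigr => e _; rewrite big_bool.
have -> : \prod_d sgn_end d = \prod_(d in v0) (-1) ^+ 'C(dcol col d, 2) :> int.
  rewrite [RHS]big_mkcond; apply: eq_bigr => d _; rewrite /sgn_end /end_flip.
  by case: (d \in v0); rewrite ?odd_rev_perm ?signr_odd ?odd_perm1.
by rewrite -big_uniq ?v0_uniq // big_seq3 /vertex_sign_exp !exprD.
Qed.

(* Penrose evaluation: reindex the state sum by the involution twist. *)
Lemma penroseP_reverse :
  penroseP rot' col colC = (-1) ^+ vertex_sign_exp * penroseP rot col colC.
Proof.
rewrite /penroseP admissible_reverse; case: (admissible rot col); last by rewrite mulr0.
rewrite mulrA; congr (_ * _).
rewrite [LHS](reindex_inj (inv_inj twistK)) mulr_sumr.
by apply: eq_bigr => s _; rewrite nloops_reverse sign_twist mulrA.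
Qed.

(* Standard evaluation: admissibility and I! are unchanged. *)
Lemma std_eval_reverse :
  std_eval rot' col colC = (-1) ^+ vertex_sign_exp * std_eval rot col colC.
Proof.
rewrite /std_eval admissible_reverse Ifact_reverse penroseP_reverse.
case: (admissible rot col); last by rewrite mulr0.
by rewrite rmorphM /= rmorphXn /= rmorphN rmorph1 mulrA.
Qed.

End ReverseVertex.

Theorem lemma6p1 (E C : finType) (rot : E * bool -> E * bool)
    (col : E -> nat) (colC : C -> nat) (d0 : E * bool) :
  cubic rot ->
  let a := col d0.1 in
  let b := col (rot d0).1 in
  let c := col (rot (rot d0)).1 in
  let k := (a * a.-1 + b * b.-1 + c * c.-1) %/ 2 in
  penroseP (reverse_at rot d0) col colC = ((-1) ^+ k * penroseP rot col colC)%R /\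
  std_eval (reverse_at rot d0) col colC = ((-1) ^+ k * std_eval rot col colC)%R.
Proof.
move=> rot_cubic a b c k.
have -> : k = vertex_sign_exp rot col d0.
  by rewrite /k /a /b /c !mul_pred_binom -!mulnDl mulnK.
by split; [exact: penroseP_reverse | exact: std_eval_reverse].
Qed.
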